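(* The map $\Lambda:\Xi\to\Psi:=\Lambda(\Xi)$ is a bijection, and in terms of $\psi=\Lambda(\Gamma(\theta))$ the log-likelihood of the observed data is $$L(\psi)=\sum_{k=1}^K n_k\log\xi_{S_k}(\psi)+\sum_{i\in E}n_i(1)\,\psi_i ,$$ where $\xi(\psi)=\Lambda^{-1}(\psi)$. Equivalently, in terms of $\xi\in\Xi$, $$L(\xi)=\sum_{i\in E}\Big[n_i(1)\log\frac{1-\xi_i}{1-\prod_{j\in C_i}\xi_j}+n_i(0)\log\xi_i\Big],$$ with the convention that the empty product over $C_i=\emptyset$ equals $0$. Moreover, for non-leaf $i$, $\psi_i=\log P(X_i=1\mid \text{probe at tail of } i,\ X_r=0\ \forall r\in R_i)$.
   Context: Network: a finite set of directed links $E=\{1,\dots,m\}$ between nodes, forming a directed acyclic graph. For a link $i$, $C_i$ is the set of links whose tail is the head of $i$ (child links); $B_i$ is the set of links having the same tail as $i$ (brother links, including $i$ itself); $F_i$ is the set of links whose head is the tail of $i$ (parent links). A link $i$ is a leaf link if $C_i=\emptyset$; $R$ is the set of leaf links, and $R_i$ is the set of leaf links that are descendants of $i$ (including $i$ itself if $i$ is a leaf). The network is covered by $K\ge1$ multicast trees $T_1,\dots,T_K$: $T_k$ has a root link $S_k$ whose tail is a source node with no incoming link ($F_{S_k}=\emptyset$); its link set $E_k$ consists of $S_k$ and all descendants of $S_k$; every link $i\in E_k\setminus\{S_k\}$ has exactly one parent link in $E_k$, denoted $f^{(k)}_i\in F_i\cap E_k$; every link belongs to some $E_k$; each root link $S_k$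 belongs only to $E_k$. Write $\mathscr S=\{S_1,\dots,S_K\}$. Loss model: each link $i$ has loss rate $\theta_i$, $\theta\in\Theta=(0,1)^m$. From the source of tree $T_k$, $n_k$ probes are sent. For probe $t$ in tree $k$ and $i\in E_k$, $X^{(k,t)}_i=1$ if the probe reached the head of link $i$ and $0$ otherwise. A probe at the tail of link $i$ (i.e., $i=S_k$, or $X^{(k,t)}_{f^{(k)}_i}=1$) traverses link $i$ with probability $1-\theta_i$, independently across links, probes and trees; a probe not at the tail of $i$ does not reach its head. Only $X^{(k,t)}_r$ for leaf links $r\in R\cap E_k$ are observed; the log-likelihood is the log-probability of the observed data. Internal views: $Y^{(k,t)}_i=\max_{r\in R_i}X^{(k,t)}_r$ for $i\in E_k$; $n_{k,i}(1)=\sum_{t=1}^{n_k}Y^{(k,t)}_i$ for $i\in E_k$ and $0$ for $i\notin E_k$; $n_{k,S_k}(0)=n_k-n_{k,S_k}(1)$, $n_{k,i}(0)=n_{k,f^{(k)}_i}(1)-n_{k,i}(1)$ for $i\in E_k\setminus\{S_k\}$, and $0$ for $i\notin E_k$; $n_i(1)=\sum_k n_{k,i}(1)$, $n_i(0)=\sum_k n_{k,i}(0)$. Parameter systems: $\xi_i(\theta)=\theta_i$ for leaf $i$ and $\xi_i(\theta)=\theta_i+(1-\theta_i)\prod_{j\in C_i}\xi_j(\theta)$ otherwise (recursively from the leaves); $\Gamma(\theta)=(\xi_i(\theta))_i$, $\Xi=\Gamma(\Theta)$, with inverse $\theta_i(\xi)=\xi_i$ for leaf $i$ and $\theta_i(\xi)=(\xi_i-\prod_{j\in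 C_i}\xi_j)/(1-\prod_{j\in C_i}\xi_j)$ otherwise. For $\xi\in\Xi$ define $\Lambda(\xi)=\psi$ by $\psi_i=\log\frac{1-\theta_i(\xi)}{\xi_i}$ for leaf $i$ and $\psi_i=\log\frac{\xi_i-\theta_i(\xi)}{\xi_i}$ for non-leaf $i$. *)

From mathcomp Require Import all_boot.
From Stdlib Require Import Reals.
Open Scope R_scope.

Section Network.
Context {V : eqType} {m K : nat}.
Variables (hd tl : 'I_m -> V)       (* head / tail node of each link *)
          (S : 'I_K -> 'I_m)        (* root link of tree k *)
          (f : 'I_K -> 'I_m -> 'I_m). (* parent link f^{(k)}_i in tree k *)

Definition child (i j : 'I_m) : bool := tl j == hd i.
Definition isleaf (i : 'I_m) : bool := [forall j, ~~ child i j].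
Definition desc (i j : 'I_m) : bool := connect child i j.
Definition inTree (k : 'I_K) (j : 'I_m) : bool := desc (S k) j.

Definition trans (theta : 'I_m -> R) (x : {ffun 'I_m -> bool}) (attail : bool)
  (i : 'I_m) : R :=
  if attail then (if x i then 1 - theta i else theta i)
  else (if x i then 0 else 1).

(* probability of the full configuration x of (X_i)_{i in E_k}
   (links outside E_k are set to 0) *)
Definition weight (theta : 'I_m -> R) (k : 'I_K) (x : {ffun 'I_m -> bool}) : R :=
  \big[Rmult/1]_(i : 'I_m)
     (if inTree k i then trans theta x ((i == S k) || x (f k i)) i
      else if x i then 0 else 1).

Definition prob (theta : 'I_m -> R) (k : 'I_K)
  (A : {ffun 'I_m -> bool} -> bool) : R :=
  \big[Rplus/0]_(x : {ffun 'I_m -> bool} | A x) weight theta k x.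

(* log-likelihood of the observed leaf data: obs k t r = X^{(k,t)}_r,
   only used for leaves r in E_k and t < n k *)
Definition loglik (theta : 'I_m -> R) (n : 'I_K -> nat)
  (obs : 'I_K -> nat -> 'I_m -> bool) : R :=
  ln (\big[Rmult/1]_(k : 'I_K) \big[Rmult/1]_(t < n k)
        prob theta k (fun x => [forall r, (isleaf r && inTree k r) ==> (x r == obs k t r)])).

Definition Y (obs : 'I_K -> nat -> 'I_m -> bool) (k : 'I_K) (t : nat) (i : 'I_m) : bool :=
  [exists r, [&& isleaf r, desc i r & obs k t r]].

Definition n1k (n : 'I_K -> nat) obs (k : 'I_K) (i : 'I_m) : R :=
  if inTree k i then INR #|[pred t : 'I_(n k) | Y obs k t i]| else 0.

Definition n0k (n : 'I_K -> nat) obs (k : 'I_K) (i : 'I_m) : R :=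
  if inTree k i then
    (if i == S k then INR (n k) - n1k n obs k i
     else n1k n obs k (f k i) - n1k n obs k i)
  else 0.

Definition n1 n obs (i : 'I_m) : R := \big[Rplus/0]_(k : 'I_K) n1k n obs k i.
Definition n0 n obs (i : 'I_m) : R := \big[Rplus/0]_(k : 'I_K) n0k n obs k i.

Definition prodC (xi : 'I_m -> R) (i : 'I_m) : R :=
  \big[Rmult/1]_(j : 'I_m | child i j) xi j.

Definition gstep (theta : 'I_m -> R) (xi : 'I_m -> R) (i : 'I_m) : R :=
  if isleaf i then theta i else theta i + (1 - theta i) * prodC xi i.

(* Gamma(theta): on a DAG with m links, m iterations of the recursion
   starting anywhere give its unique solution (computed from the leaves up) *)
Definition Gamma (theta : 'I_m -> R) : 'I_m -> R := iter m (gstep theta) (fun _ => 0).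

Definition inTheta (theta : 'I_m -> R) : Prop := forall i, 0 < theta i < 1.
Definition inXi (xi : 'I_m -> R) : Prop :=
  exists theta, inTheta theta /\ forall i, xi i = Gamma theta i.

Definition thetaOf (xi : 'I_m -> R) (i : 'I_m) : R :=
  if isleaf i then xi i else (xi i - prodC xi i) / (1 - prodC xi i).

Definition Lambda (xi : 'I_m -> R) (i : 'I_m) : R :=
  if isleaf i then ln ((1 - thetaOf xi i) / xi i)
  else ln ((xi i - thetaOf xi i) / xi i).

Definition prod0 (xi : 'I_m -> R) (i : 'I_m) : R :=
  if isleaf i then 0 else prodC xi i.

End Network.

From HB Require Import structures.
From Pilot Require Import Defs.
From mathcomp Require Import all_boot.
From Stdlib Require Import Reals Lra FunctionalExtensionality.
Open Scope R_scope.
Set Implicit Arguments. Unset Strict Implicit.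

(* The law of a probe in tree [k] is a product of one factor per link, so the
   probability of an event given by per-link constraints obeys a recursion from
   the leaves up ([cprob]): summing out a subtree factorises over the children
   because their subtrees are disjoint.  For the observed leaf pattern of one
   probe, a link with no receiving leaf below it contributes [xi_i], while a
   link above a receiving leaf must be crossed and contributes
   [(1 - theta_i) * prod_(j in C_i) (contribution of j)].  As
   [(1 - theta_i) * prod_(j in C_i) xi_j = xi_i * exp psi_i], the probability
   unrolls to [xi_(S_k) * prod_(i received) exp psi_i]; summing logs over
   probes gives the first formula, and expanding
   [psi_i = ln (1 - theta_i) + sum_(j in C_i) ln xi_j - ln xi_i] and regrouping
   the counts of each tree along parent links gives the second.
   Given the values on the children, [psi_i] is the log-odds of [xi_i] up to an
   additive constant, so [Lambda] is injective by induction from the leaves.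
   Finally, the joint and the conditioning event of the last claim only differ
   in the subtree of [i], which contributes [(1 - theta_i) * prod_(j in C_i) xi_j]
   to the first and [xi_i] to the second, and this ratio is preserved all the
   way up to the root. *)

HB.instance Definition _ := Monoid.isComLaw.Build R 0 Rplus
  (fun a b c => esym (Rplus_assoc a b c)) Rplus_comm Rplus_0_l.
HB.instance Definition _ := Monoid.isComLaw.Build R 1 Rmult
  (fun a b c => esym (Rmult_assoc a b c)) Rmult_comm Rmult_1_l.
HB.instance Definition _ := Monoid.isMulLaw.Build R 0 Rmult Rmult_0_l Rmult_0_r.
HB.instance Definition _ := Monoid.isAddLaw.Build R Rmult Rplus
  Rmult_plus_distr_r Rmult_plus_distr_l.

Lemma iter_Rplus n c : iter n (Rplus c) 0 = INR n * c.
Proof. by elim: n => [|n IH]; rewrite ?iterS ?IH ?S_INR /=; ring. Qed.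

Lemma ln_div x y : 0 < x -> 0 < y -> ln (x / y) = ln x - ln y.
Proof.
by move=> x_gt0 y_gt0; rewrite ln_mult ?ln_Rinv //; apply: Rinv_0_lt_compat.
Qed.

Lemma sumR_count (I : finType) (P : pred I) c :
  \big[Rplus/0]_(i : I) (if P i then c else 0) = INR #|P| * c.
Proof. by rewrite -big_mkcond big_const iter_Rplus. Qed.

Lemma sumR_opp (I : finType) (F : I -> R) :
  \big[Rplus/0]_(i : I) - F i = - \big[Rplus/0]_(i : I) F i.
Proof. by apply: (big_rec2 (fun a b => a = - b)) => [|i a b _ ->]; ring. Qed.

Lemma prodR_gt0 (I : finType) (P : pred I) (F : I -> R) :
  (forall i, P i -> 0 < F i) -> 0 < \big[Rmult/1]_(i | P i) F i.
Proof. by move=> F_gt0; apply: big_ind => // [|a b]; [lra | nra]. Qed.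

Lemma ln_prodR (I : finType) (P : pred I) (F : I -> R) :
  (forall i, P i -> 0 < F i) ->
  ln (\big[Rmult/1]_(i | P i) F i) = \big[Rplus/0]_(i | P i) ln (F i).
Proof.
move=> F_gt0; suff [] : 0 < \big[Rmult/1]_(i | P i) F i /\
  ln (\big[Rmult/1]_(i | P i) F i) = \big[Rplus/0]_(i | P i) ln (F i) by [].
apply: (big_rec2 (fun a b => 0 < a /\ ln a = b)) => [|i a b /F_gt0 Fi [a_gt0 <-]].
  by rewrite ln_1; split; lra.
by split; [nra | rewrite ln_mult].
Qed.

Lemma prodR_mask (I : finType) (A : {pred I}) (P : pred I) (F : I -> R) :
  \big[Rmult/1]_(j in A) (if P j then F j else 0) =
    if [forall (j | j \in A), P j] then \big[Rmult/1]_(j in A) F j else 0.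
Proof.
case: ifP => [/forallP AP | /negbT /forallPn [j]].
  by apply: eq_bigr => j jA; rewrite (implyP (AP j) jA).
by rewrite negb_imply => /andP[jA /negbTE Pj]; rewrite (bigD1 j) //= Pj Rmult_0_l.
Qed.

Lemma odds_inj a b : 0 < a -> 0 < b -> (1 - a) / a = (1 - b) / b -> a = b.
Proof.
move=> a_gt0 b_gt0 ab; apply: Rinv_eq_reg.
suff: / a - 1 = / b - 1 by lra.
by transitivity ((1 - a) / a); [|rewrite ab]; field; lra.
Qed.

Lemma disjoint_bigcup_cons (T I : finType) (D : I -> {set T}) c s :
  c \notin s -> {in c :: s &, forall c1 c2, c1 != c2 -> [disjoint D c1 & D c2]} ->
  [disjoint D c & \bigcup_(c' <- s) D c'].
Proof.
move=> c_notin_s disjD; rewrite bigcup_seq; apply: bigcup_disjoint => c' c's.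
apply: disjD; rewrite ?inE ?eqxx ?c's ?orbT //.
by apply: contraNneq c_notin_s => ->.
Qed.

Lemma big_bigcup_disjoint (T I : finType) (A : Type) (idx : A) (op : Monoid.com_law idx)
    (D : I -> {set T}) (s : seq I) (F : T -> A) :
  uniq s -> {in s &, forall c1 c2, c1 != c2 -> [disjoint D c1 & D c2]} ->
  \big[op/idx]_(l in \bigcup_(c <- s) D c) F l =
    \big[op/idx]_(c <- s) \big[op/idx]_(l in D c) F l.
Proof.
elim: s => [|c s IH] /= => [_ _ | /andP[c_notin_s uniq_s] disjD].
  by rewrite !big_nil; apply: big_pred0 => l; rewrite inE.
rewrite !big_cons -IH //; last by move=> c1 c2 c1s c2s; apply: disjD; rewrite inE ?c1s ?c2s orbT.
rewrite -bigU; first by apply: eq_bigl => l; rewrite !inE.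
exact: disjoint_bigcup_cons.
Qed.

(** * Induction along the DAG and the parameter maps *)

Section Dag.
Variables (V : eqType) (m : nat) (hd tl : 'I_m -> V).
Local Notation child := (child hd tl).
Local Notation desc := (desc hd tl).
Local Notation isleaf := (isleaf hd tl).
Hypothesis acyclic : forall i j, child i j -> ~~ desc j i.

Definition subtree i : {set 'I_m} := [set l | desc i l].

Lemma desc_refl i : desc i i. Proof. exact: connect0. Qed.

Lemma card_subtree_child i j : child i j -> (#|subtree j| < #|subtree i|)%nat.
Proof.
move=> ij; apply/proper_card/properP; split.
  by apply/subsetP=> l; rewrite !inE; apply/connect_trans/connect1.
by exists i; rewrite inE ?desc_refl ?acyclic.
Qed.

Lemma dag_ind (P : 'I_m -> Prop) :
  (forall i, (forall j, child i j -> P j) -> P i) -> forall i, P i.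
Proof.
move=> IH i; have [n] := ubnP #|subtree i|; elim: n => // n IHn in i *.
rewrite ltnS => le_in; apply: IH => j /card_subtree_child lt_ji.
by apply: IHn; apply: leq_trans lt_ji le_in.
Qed.

Lemma iter_dag_fix (T : Type) (F : ('I_m -> T) -> 'I_m -> T) (z : 'I_m -> T) :
  (forall g1 g2 i, (forall j, child i j -> g1 j = g2 j) -> F g1 i = F g2 i) ->
  forall i, iter m F z i = F (iter m F z) i.
Proof.
move=> F_local.
suff fix_n i n : (#|subtree i| <= n)%nat -> iter n F z i = F (iter n F z) i.
  by move=> i; apply: fix_n; have := max_card (mem (subtree i)); rewrite card_ord.
elim/dag_ind: i n => i IH [|n] le_in.
  by move: le_in; rewrite leqn0 cards_eq0 => /eqP/setP/(_ i); rewrite !inE desc_refl.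
apply: F_local => j ij; apply: IH => //.
by rewrite -ltnS; apply: leq_trans (card_subtree_child ij) le_in.
Qed.

Lemma desc_first_step i l : desc i l -> l = i \/ exists2 c, child i c & desc c l.
Proof.
case/connectP=> [[|c p]] /= => [_ ->|/andP[ic cp] ->]; first by left.
by right; exists c => //; apply/connectP; exists p.
Qed.

Lemma desc_last_step a l : desc a l -> l != a -> exists2 q, desc a q & child q l.
Proof.
case/connectP=> p; elim/last_ind: p => [/= _ -> /eqP //|p q _].
rewrite rcons_path last_rcons => /andP[ap pq] -> _.
by exists (last a p) => //; apply/connectP; exists p.
Qed.

Lemma leaf_desc i l : isleaf i -> desc i l -> l = i.
Proof.
by move=> /forallP leaf_i /desc_first_step [// | [c ic _]]; have := leaf_i c; rewrite ic.
Qed.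

Lemma nonleafP i : ~~ isleaf i -> exists c, child i c.
Proof. by case/forallPn=> c; rewrite negbK; exists c. Qed.

Lemma big_child_leaf (T : Type) (idx : T) (op : Monoid.com_law idx) i (F : 'I_m -> T) :
  isleaf i -> \big[op/idx]_(j | child i j) F j = idx.
Proof. by move/forallP=> leaf_i; rewrite big_pred0 // => j; apply/negbTE/leaf_i. Qed.

Local Notation prodC := (prodC hd tl).
Local Notation Gamma := (Gamma hd tl).

Lemma Gamma_rec th i :
  Gamma th i = if isleaf i then th i else th i + (1 - th i) * prodC (Gamma th) i.
Proof.
rewrite /Gamma iter_dag_fix // => g1 g2 j g12; rewrite /gstep /prodC.
by rewrite (eq_bigr _ g12).
Qed.

Lemma prodC_gt0_le1 g i : (forall j, child i j -> 0 < g j < 1) -> 0 < prodC g i <= 1.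
Proof.
by move=> g01; apply: (big_ind (fun x => 0 < x <= 1)) => [|a b|j /g01]; [lra | nra | lra].
Qed.

Lemma prodC_lt1 g i :
  (forall j, child i j -> 0 < g j < 1) -> ~~ isleaf i -> prodC g i < 1.
Proof.
move=> g01 /nonleafP [c ic]; rewrite /prodC (bigD1 c) //=.
have [gc_gt0 gc_lt1] := g01 c ic.
apply: (Rle_lt_trans _ (g c * 1)); last lra.
apply: Rmult_le_compat_l; first lra.
apply: (@proj2 (0 <= _)); apply: (big_ind (fun x => 0 <= x <= 1)) => [|a b|j /andP[/g01]].
all: nra.
Qed.

Lemma Gamma_bounds th : inTheta th -> forall i, 0 < Gamma th i < 1.
Proof.
move=> th01; elim/dag_ind=> i IH; rewrite Gamma_rec.
have := th01 i; case: ifP => [_ | /negbT nonleaf_i]; first lra.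
by have := prodC_gt0_le1 IH; have := prodC_lt1 IH nonleaf_i; nra.
Qed.

Lemma inXi_bounds xi : inXi hd tl xi -> forall i, 0 < xi i < 1.
Proof. by case=> th [th01 xiE] i; rewrite xiE; apply: Gamma_bounds. Qed.

Local Notation Lambda := (Lambda hd tl).

Lemma Lambda_odds xi i : (forall j, 0 < xi j < 1) ->
  Lambda xi i = ln ((1 - xi i) / xi i) +
    (if isleaf i then 0 else ln (prodC xi i / (1 - prodC xi i))).
Proof.
move=> xi01; have xi_i := xi01 i.
rewrite /Lambda /thetaOf; case: (boolP (isleaf i)) => [_ | nonleaf_i]; first by rewrite Rplus_0_r.
have P_gt0 := proj1 (@prodC_gt0_le1 xi i (fun j _ => xi01 j)).
have P_lt1 := prodC_lt1 (fun j _ => xi01 j) nonleaf_i.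
set P := prodC xi i in P_gt0 P_lt1 *.
have -> : (xi i - (xi i - P) / (1 - P)) / xi i = (1 - xi i) / xi i * (P / (1 - P)).
  by field; split; lra.
by rewrite ln_mult //; apply: Rdiv_lt_0_compat; lra.
Qed.

Lemma Lambda_inj xi1 xi2 :
  (forall j, 0 < xi1 j < 1) -> (forall j, 0 < xi2 j < 1) ->
  (forall i, Lambda xi1 i = Lambda xi2 i) -> forall i, xi1 i = xi2 i.
Proof.
move=> xi1_01 xi2_01 eq_psi; elim/dag_ind=> i IH.
have eq_prodC : prodC xi1 i = prodC xi2 i by apply: eq_bigr.
have := eq_psi i; rewrite !Lambda_odds // eq_prodC => /Rplus_eq_reg_r ln_odds_eq.
have [? ?] := xi1_01 i; have [? ?] := xi2_01 i.
by apply: odds_inj => //; apply: ln_inv ln_odds_eq; apply: Rdiv_lt_0_compat; lra.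
Qed.

Lemma thetaOf_Gamma th i : inTheta th -> thetaOf hd tl (Gamma th) i = th i.
Proof.
move=> th01; rewrite /thetaOf (Gamma_rec th i); case: (boolP (isleaf i)) => // nonleaf_i.
have := prodC_lt1 (fun j _ => Gamma_bounds th01 j) nonleaf_i.
by move=> P_lt1; field; lra.
Qed.

Lemma Gamma_loss_ratio th i : inTheta th ->
  (1 - Gamma th i) / (1 - prod0 hd tl (Gamma th) i) = 1 - th i.
Proof.
move=> th01; rewrite /prod0 (Gamma_rec th i); case: (boolP (isleaf i)) => [_ | nonleaf_i].
  by field.
have := prodC_lt1 (fun j _ => Gamma_bounds th01 j) nonleaf_i.
by move=> P_lt1; field; lra.
Qed.

Lemma Lambda_Gamma th i : inTheta th ->
  Lambda (Gamma th) i =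
    ln (1 - th i) + \big[Rplus/0]_(c | child i c) ln (Gamma th c) - ln (Gamma th i).
Proof.
move=> th01; have Gamma01 := Gamma_bounds th01; have [? ?] := th01 i.
have [? ?] := Gamma01 i.
rewrite /Lambda thetaOf_Gamma //; case: (boolP (isleaf i)) => [leaf_i | nonleaf_i].
  by rewrite big_child_leaf // Rplus_0_r ln_div; lra.
have [P_gt0 _] := @prodC_gt0_le1 (Gamma th) i (fun j _ => Gamma01 j).
have -> : Gamma th i - th i = (1 - th i) * prodC (Gamma th) i.
  by rewrite Gamma_rec (negbTE nonleaf_i); ring.
rewrite ln_div ?ln_mult ?ln_prodR //; try nra.
by move=> j _; case: (Gamma01 j).
Qed.

End Dag.

(** * Sums over probe configurations *)

Section Configurations.
Variable m : nat.
Local Notation config := {ffun 'I_m -> bool}.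
Implicit Types (x y : config) (A B : {set 'I_m}).

Definition supported_on x A := [forall j, (j \notin A) ==> ~~ x j].
Definition depends_on (F : config -> R) A := forall x y, {in A, x =1 y} -> F x = F y.

Lemma supported_onP x A : reflect (forall j, j \notin A -> x j = false) (supported_on x A).
Proof.
apply: (iffP forallP) => [x_supp j /(implyP (x_supp j)) /negbTE // | x_supp j].
by apply/implyP => /x_supp ->.
Qed.

(* [x |-> (x restricted to A, x restricted to B)] is a bijection from the
   configurations supported on [A :|: B] onto pairs supported on [A] and [B]. *)
Lemma sum_supported_setU A B (F G : config -> R) :
  [disjoint A & B] -> depends_on F A -> depends_on G B ->
  \big[Rplus/0]_(x | supported_on x (A :|: B)) (F x * G x) =
  (\big[Rplus/0]_(x | supported_on x A) F x) * (\big[Rplus/0]_(x | supported_on x B) G x).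
Proof.
move=> dAB dep_F dep_G.
pose restr (C : {set 'I_m}) x : config := [ffun j => (j \in C) && x j].
rewrite big_distrlr /= pair_big_dep /=.
rewrite (reindex_onto (fun p : config * config => [ffun j => p.1 j || p.2 j])
                      (fun x => (restr A x, restr B x))) /=; last first.
  move=> x /supported_onP x_supp; apply/ffunP => j; rewrite !ffunE.
  case jA: (j \in A); case jB: (j \in B); rewrite /= ?orbF ?orbb //.
  by rewrite x_supp // inE jA jB.
apply: eq_big => [[y z] | [y z] /andP[_ /eqP[Ey Ez]]] /=.
  apply/idP/idP => [/andP[_ /eqP[<- <-]] | /andP[/supported_onP y_supp /supported_onP z_supp]].
    by apply/andP; split; apply/supported_onP => j jC; rewrite ffunE (negbTE jC).
  apply/andP; split.
    by apply/supported_onP => j; rewrite inE negb_or => /andP[jA jB]; rewrite ffunE y_supp ?z_supp.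
  apply/eqP; congr pair; apply/ffunP => j; rewrite !ffunE.
    case jA: (j \in A) => /=; last by rewrite y_supp ?jA.
    by rewrite (z_supp j) ?orbF // (disjointFr dAB jA).
  case jB: (j \in B) => /=; last by rewrite z_supp ?jB.
  by rewrite (y_supp j) ?(disjointFl dAB jB).
congr Rmult; [apply: dep_F => j jA | apply: dep_G => j jB]; rewrite ffunE.
  by rewrite -[z]Ez ffunE (disjointFr dAB jA) orbF.
by rewrite -[y]Ey ffunE (disjointFl dAB jB).
Qed.

Lemma sum_supported_set1 i (F : config -> R) :
  \big[Rplus/0]_(x | supported_on x [set i]) F x =
    F [ffun j => j == i] + F [ffun => false].
Proof.
pose pt b : config := [ffun j => (j == i) && b].
rewrite (reindex_onto pt (fun x => x i)) /=; last first.
  move=> x /supported_onP x_supp; apply/ffunP => j; rewrite !ffunE.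
  by case: (eqVneq j i) => [-> | ji] //=; rewrite x_supp // inE.
rewrite (eq_bigl (fun _ => true)) => [|b]; last first.
  rewrite ffunE eqxx /= eqxx andbT.
  by apply/supported_onP => j; rewrite inE ffunE => /negbTE ->.
rewrite big_bool; congr (F _ + F _); apply/ffunP => j; rewrite !ffunE ?andbT ?andbF //.
Qed.

Lemma sum_supported_set0 (F : config -> R) :
  \big[Rplus/0]_(x | supported_on x set0) F x = F [ffun => false].
Proof.
rewrite (big_pred1 [ffun => false]) // => x; apply/idP/eqP => [/supported_onP x_supp | ->].
  by apply/ffunP => j; rewrite ffunE x_supp // inE.
by apply/supported_onP => j _; rewrite ffunE.
Qed.

Lemma sum_supported_bigcup (D : 'I_m -> {set 'I_m}) (s : seq 'I_m) (F : 'I_m -> config -> R) :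
  uniq s -> {in s &, forall c1 c2, c1 != c2 -> [disjoint D c1 & D c2]} ->
  (forall c, c \in s -> depends_on (F c) (D c)) ->
  \big[Rplus/0]_(x | supported_on x (\bigcup_(c <- s) D c)) \big[Rmult/1]_(c <- s) F c x =
    \big[Rmult/1]_(c <- s) \big[Rplus/0]_(x | supported_on x (D c)) F c x.
Proof.
elim: s => [|c s IH] /= => [_ _ _ | /andP[c_notin_s uniq_s] disjD dep_F].
  by rewrite !big_nil sum_supported_set0 big_nil.
have disjD' : {in s &, forall c1 c2, c1 != c2 -> [disjoint D c1 & D c2]}.
  by move=> c1 c2 c1s c2s; apply: disjD; rewrite inE ?c1s ?c2s orbT.
rewrite [RHS]big_cons -IH //; last by move=> c' c's; apply: dep_F; rewrite inE c's orbT.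
rewrite big_cons.
under eq_bigr do rewrite big_cons.
apply: sum_supported_setU; first exact: disjoint_bigcup_cons.
  by apply: dep_F; rewrite inE eqxx.
move=> x y xy; apply: eq_big_seq => c' c's; apply: (dep_F c'); first by rewrite inE c's orbT.
by move=> j jD; apply: xy; rewrite bigcup_seq; apply/bigcupP; exists c'.
Qed.

Lemma sum_supported_setU1 (i : 'I_m) (U : {set 'I_m}) (F : bool -> R) (G : bool -> config -> R) :
  i \notin U -> (forall b, depends_on (G b) U) ->
  \big[Rplus/0]_(x | supported_on x (i |: U)) (F (x i) * G (x i) x) =
    \big[Rplus/0]_(b : bool) (F b * \big[Rplus/0]_(y | supported_on y U) G b y).
Proof.
move=> i_notin_U dep_G.
rewrite (eq_bigr (fun x => \big[Rplus/0]_(b : bool) ((if x i == b then F b else 0) * G b x)));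
  last by move=> x _; rewrite big_bool; case: (x i) => /=; ring.
rewrite exchange_big; apply: eq_bigr => b _.
rewrite sum_supported_setU ?disjoints1 // => [|x y xy]; last by rewrite xy // inE.
by rewrite sum_supported_set1 !ffunE eqxx; case: b => /=; ring.
Qed.

End Configurations.

(** * Probabilities of per-link events in a multicast tree *)

Section Trees.
Variables (V : eqType) (m K : nat) (hd tl : 'I_m -> V).
Variables (S : 'I_K -> 'I_m) (f : 'I_K -> 'I_m -> 'I_m).
Local Notation child := (child hd tl).
Local Notation desc := (desc hd tl).
Local Notation isleaf := (isleaf hd tl).
Local Notation inTree := (inTree hd tl S).
Local Notation subtree := (subtree hd tl).
Local Notation config := {ffun 'I_m -> bool}.
Hypothesis acyclic : forall i j, child i j -> ~~ desc j i.
Hypothesis root_source : forall k j, ~~ child j (S k).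
Hypothesis parentP : forall k i, inTree k i -> i != S k -> child (f k i) i && inTree k (f k i).
Hypothesis parent_unique : forall k i j,
  inTree k i -> i != S k -> child j i -> inTree k j -> j = f k i.

Lemma inTree_desc k i j : inTree k i -> desc i j -> inTree k j.
Proof. exact: connect_trans. Qed.

Lemma inTree_child k i j : inTree k i -> child i j -> inTree k j.
Proof. by move=> ki /connect1; apply: inTree_desc. Qed.

Lemma inTree_root k : inTree k (S k).
Proof. exact: desc_refl. Qed.

Lemma child_neq_root k i j : child i j -> j != S k.
Proof. by move=> ij; apply: contraTneq ij => ->; apply: root_source. Qed.

Lemma desc_parent k a l : inTree k a -> desc a l -> l != a -> (l != S k) && desc a (f k l).
Proof.
move=> ka al l_neq_a; have [q aq ql] := desc_last_step al l_neq_a.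
have kq := inTree_desc ka aq; have l_neq_S := child_neq_root k ql.
by rewrite l_neq_S -(parent_unique (inTree_child kq ql) l_neq_S ql kq).
Qed.

Lemma desc_parent_neq k i : inTree k i -> i != S k -> desc i (f k i) = false.
Proof. by move=> ki i_neq_S; case/andP: (parentP ki i_neq_S) => /acyclic /negbTE. Qed.

Lemma tree_ancestors_total k l a1 a2 : inTree k a1 -> inTree k a2 ->
  desc a1 l -> desc a2 l -> desc a1 a2 || desc a2 a1.
Proof.
have [n] := ubnP #|[set a | desc a l]|; elim: n => // n IH in l *.
rewrite ltnS => le_ln k1 k2 a1l a2l.
have [<- | l_neq_a1] := eqVneq l a1; first by rewrite a2l orbT.
have [<- | l_neq_a2] := eqVneq l a2; first by rewrite a1l.
case/andP: (desc_parent k1 a1l l_neq_a1) => l_neq_S a1_fl.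
case/andP: (desc_parent k2 a2l l_neq_a2) => _ a2_fl.
apply: (IH (f k l)) => //; apply: leq_trans le_ln.
case/andP: (parentP (inTree_desc k1 a1l) l_neq_S) => fl_l _.
apply/proper_card/properP; split.
  by apply/subsetP=> a; rewrite !inE => /connect_trans; apply; apply: connect1.
by exists l; rewrite !inE ?desc_refl ?acyclic.
Qed.

Lemma child_subtrees_disjoint k i c1 c2 l : inTree k i -> child i c1 -> child i c2 ->
  desc c1 l -> desc c2 l -> c1 = c2.
Proof.
move=> ki ic1 ic2 c1l c2l.
suff le_c c c' : child i c -> child i c' -> desc c c' -> c = c'.
  by case/orP: (tree_ancestors_total (inTree_child ki ic1) (inTree_child ki ic2) c1l c2l);
    [apply: le_c | move/(le_c _ _ ic2 ic1)/esym].
move=> ic ic' cc'; apply/eqP; apply: contraT; rewrite eq_sym => c'_neq_c.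
have kc := inTree_child ki ic; have kc' := inTree_child ki ic'.
case/andP: (desc_parent kc cc' c'_neq_c) => c'_neq_S c_fc'.
by rewrite -(parent_unique kc' c'_neq_S ic' ki) (negbTE (acyclic ic)) in c_fc'.
Qed.

Definition children i := [seq c <- enum 'I_m | child i c].

Lemma uniq_children i : uniq (children i).
Proof. by rewrite filter_uniq ?enum_uniq. Qed.

Lemma mem_children i c : (c \in children i) = child i c.
Proof. by rewrite mem_filter mem_enum andbT. Qed.

Lemma big_children (A : Type) (idx : A) (op : Monoid.com_law idx) i (F : 'I_m -> A) :
  \big[op/idx]_(c <- children i) F c = \big[op/idx]_(c | child i c) F c.
Proof. by rewrite big_filter big_enum_cond. Qed.

Lemma subtree_children i : subtree i = i |: \bigcup_(c <- children i) subtree c.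
Proof.
apply/setP => l; rewrite !inE bigcup_seq; apply/idP/idP.
  case/desc_first_step => [-> | [c ic cl]]; first by rewrite eqxx.
  by apply/orP; right; apply/bigcupP; exists c; rewrite ?mem_children ?inE.
case/orP => [/eqP -> | /bigcupP [c]]; first exact: desc_refl.
by rewrite mem_children inE => /connect1 /connect_trans; apply.
Qed.

Lemma notin_subtree_children i : i \notin \bigcup_(c <- children i) subtree c.
Proof.
rewrite bigcup_seq; apply/bigcupP => [[c]]; rewrite mem_children inE => ic ci.
by have := acyclic ic; rewrite ci.
Qed.

Lemma disjoint_subtree_children k i : inTree k i ->
  {in children i &, forall c1 c2, c1 != c2 -> [disjoint subtree c1 & subtree c2]}.
Proof.
move=> ki c1 c2; rewrite !mem_children => ic1 ic2 c1_neq_c2.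
rewrite -setI_eq0; apply/eqP/setP => l; rewrite !inE.
apply/negbTE/andP => -[c1l c2l].
by move/eqP: c1_neq_c2; apply; apply: child_subtrees_disjoint ki ic1 ic2 c1l c2l.
Qed.

Lemma big_subtree (A : Type) (idx : A) (op : Monoid.com_law idx) k i (F : 'I_m -> A) :
  inTree k i ->
  \big[op/idx]_(l in subtree i) F l =
    op (F i) (\big[op/idx]_(c | child i c) \big[op/idx]_(l in subtree c) F l).
Proof.
move=> ki; rewrite {1}subtree_children big_setU1 ?notin_subtree_children //=.
by rewrite big_bigcup_disjoint ?uniq_children ?big_children //; apply: disjoint_subtree_children ki.
Qed.

Section ConstrainedProb.
Variables (th : 'I_m -> R) (c : 'I_m -> bool -> bool).

Definition link_prob i (a b : bool) : R :=
  if a then (if b then 1 - th i else th i) else (if b then 0 else 1).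

Definition cprob_step (g : 'I_m -> bool -> R) i (a : bool) : R :=
  \big[Rplus/0]_(b | c i b) (link_prob i a b * \big[Rmult/1]_(j | child i j) g j b).

(* [cprob i a] is the probability that every link [l] below [i] satisfies
   [c l X_l], given that the probe is at the tail of [i] iff [a]. *)
Definition cprob : 'I_m -> bool -> R := iter m cprob_step (fun _ _ => 0).

Lemma cprob_rec i a :
  cprob i a = \big[Rplus/0]_(b | c i b) (link_prob i a b * \big[Rmult/1]_(j | child i j) cprob j b).
Proof.
have -> // : cprob i = cprob_step cprob i.
apply: (iter_dag_fix acyclic) => g1 g2 j g12; apply: functional_extensionality => b.
rewrite /cprob_step; apply: eq_bigr => b' _; congr (_ * _).
by apply: eq_bigr => l jl; rewrite g12.
Qed.

Lemma cprob_recE i a : cprob i a =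
  (if c i true then link_prob i a true * \big[Rmult/1]_(j | child i j) cprob j true else 0) +
  (if c i false then link_prob i a false * \big[Rmult/1]_(j | child i j) cprob j false else 0).
Proof. by rewrite cprob_rec big_mkcond big_bool. Qed.

Variable k : 'I_K.

Definition link_factor i a (x : config) j : R :=
  if c j (x j) then link_prob j (if j == i then a else x (f k j)) (x j) else 0.

Lemma link_factor_child i cc a x j : inTree k i -> child i cc -> j \in subtree cc ->
  link_factor i a x j = link_factor cc (x i) x j.
Proof.
move=> ki icc; rewrite inE => ccj; rewrite /link_factor.
have -> : (j == i) = false by apply: contraNF (acyclic icc) => /eqP <-.
have [-> | //] := eqVneq j cc.
by rewrite -(parent_unique (inTree_child ki icc) (child_neq_root k icc) icc ki).
Qed.

Lemma link_factor_depends cc b : inTree k cc ->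
  depends_on (fun x => \big[Rmult/1]_(j in subtree cc) link_factor cc b x j) (subtree cc).
Proof.
move=> kcc x y xy; apply: eq_bigr => j ccj; rewrite /link_factor xy //.
have [// | j_neq_cc] := eqVneq j cc; rewrite xy //.
by move: ccj; rewrite !inE => ccj; case/andP: (desc_parent kcc ccj j_neq_cc).
Qed.

Lemma sum_link_factors i a : inTree k i ->
  \big[Rplus/0]_(x | supported_on x (subtree i))
    \big[Rmult/1]_(j in subtree i) link_factor i a x j = cprob i a.
Proof.
elim/(dag_ind acyclic): i a => i IH a ki.
pose G b x := \big[Rmult/1]_(cc <- children i) \big[Rmult/1]_(j in subtree cc) link_factor cc b x j.
have kcc cc : cc \in children i -> inTree k cc by rewrite mem_children; apply: inTree_child.
transitivity (\big[Rplus/0]_(x | supported_on x (subtree i))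
    ((if c i (x i) then link_prob i a (x i) else 0) * G (x i) x)).
  apply: eq_bigr => x _; rewrite (big_subtree _ _ ki) /link_factor eqxx -big_children.
  congr Rmult; apply: eq_big_seq => cc; rewrite mem_children => icc.
  by apply: eq_bigr => j; apply: link_factor_child.
rewrite subtree_children.
rewrite (@sum_supported_setU1 _ i _ (fun b => if c i b then link_prob i a b else 0) G);
  rewrite ?notin_subtree_children //; last first.
  move=> b x y xy; apply: eq_big_seq => cc ccs; apply: link_factor_depends (kcc _ ccs) _ _ _.
  by move=> j j_cc; apply: xy; rewrite bigcup_seq; apply/bigcupP; exists cc.
rewrite cprob_rec [RHS]big_mkcond; apply: eq_bigr => b _; case: ifP => _; last exact: Rmult_0_l.
rewrite /G sum_supported_bigcup ?uniq_children //.
- congr (_ * _); rewrite -big_children; apply: eq_big_seq => j; rewrite mem_children => ij.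
  by apply: IH => //; apply: inTree_child ki ij.
- exact: disjoint_subtree_children ki.
- by move=> cc /kcc; apply: link_factor_depends.
Qed.

End ConstrainedProb.

Lemma weight_supported th k x : weight hd tl S f th k x =
  if supported_on x (subtree (S k))
  then \big[Rmult/1]_(j in subtree (S k)) link_prob th j ((j == S k) || x (f k j)) (x j)
  else 0.
Proof.
rewrite /weight (bigID (inTree k)) /=.
have -> : \big[Rmult/1]_(j | inTree k j)
    (if inTree k j then trans th x ((j == S k) || x (f k j)) j else if x j then 0 else 1) =
  \big[Rmult/1]_(j in subtree (S k)) link_prob th j ((j == S k) || x (f k j)) (x j).
  by apply: eq_big => [j | j ->]; rewrite ?inE.
case: (boolP (supported_on x _)) => [/supported_onP x_supp | /forallPn [j]].
  rewrite [X in _ * X]big1 ?Rmult_1_r // => j kj.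
  by rewrite (negbTE kj) x_supp // inE.
rewrite negb_imply negbK inE => /andP[kj xj].
have kjF : inTree k j = false by apply: negbTE.
by rewrite [X in _ * X](bigD1 j) ?kjF //= xj Rmult_0_l Rmult_0_r.
Qed.

Lemma prob_constrained th c k (A : pred config) :
  (forall x, A x = [forall j, inTree k j ==> c j (x j)]) ->
  prob hd tl S f th k A = cprob th c (S k) true.
Proof.
move=> AE; rewrite /prob -(sum_link_factors th c true (inTree_root k)) big_mkcond [RHS]big_mkcond.
apply: eq_bigr => x _; rewrite AE weight_supported /link_factor prodR_mask.
rewrite (eq_forallb (P2 := fun j => (j \in subtree (S k)) ==> c j (x j))) => [|j];
  last by rewrite inE.
by case: (supported_on _ _); case: [forall j, _].
Qed.

Lemma cprob_ext th c1 c2 i : {in subtree i, forall l, c1 l =1 c2 l} ->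
  cprob th c1 i =1 cprob th c2 i.
Proof.
elim/(dag_ind acyclic): i => i IH c12 a; rewrite !cprob_rec.
apply: eq_big => [b | b _]; first by rewrite c12 // inE desc_refl.
congr (_ * _); apply: eq_bigr => j ij; apply: IH => // l; rewrite inE => jl.
by apply: c12; rewrite inE; apply: connect_trans (connect1 ij) jl.
Qed.

Definition no_leaf_reached l (b : bool) := isleaf l ==> ~~ b.

Lemma cprob_no_leaf_reached th i : inTheta th ->
  cprob th no_leaf_reached i true = Gamma hd tl th i /\ cprob th no_leaf_reached i false = 1.
Proof.
move=> th01; elim/(dag_ind acyclic): i => i IH.
rewrite !cprob_recE /no_leaf_reached (Gamma_rec acyclic th i).
case: (boolP (isleaf i)) => [leaf_i | _] /=.
  by rewrite !big_child_leaf //; split; rewrite /link_prob; ring.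
rewrite (eq_bigr _ (fun j ij => proj1 (IH j ij))) (eq_bigr _ (fun j ij => proj2 (IH j ij))).
rewrite -[\big[Rmult/1]_(j | child i j) _]/(prodC hd tl (Gamma hd tl th) i).
by rewrite big1_eq /link_prob; split; ring.
Qed.

Definition received (o : 'I_m -> bool) l := [exists r, [&& isleaf r, desc l r & o r]].
Definition agrees_at_leaves (o : 'I_m -> bool) l b := isleaf l ==> (b == o l).

Lemma received_desc o i l : desc i l -> received o l -> received o i.
Proof.
move=> il /existsP [r /and3P[leaf_r lr or]].
by apply/existsP; exists r; apply/and3P; split=> //; apply: connect_trans il lr.
Qed.

Lemma received_nonleaf o i : ~~ isleaf i -> received o i -> exists2 j, child i j & received o j.
Proof.
move=> nonleaf_i /existsP [r /and3P[leaf_r ir or]].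
case: (desc_first_step ir) => [ri | [j ij jr]]; first by rewrite -ri leaf_r in nonleaf_i.
by exists j => //; apply/existsP; exists r; rewrite leaf_r jr or.
Qed.

Lemma cprob_unreceived th o i : inTheta th -> ~~ received o i ->
  cprob th (agrees_at_leaves o) i true = Gamma hd tl th i.
Proof.
move=> th01 unrec_i; rewrite -(proj1 (cprob_no_leaf_reached i th01)).
apply: cprob_ext => l il b; rewrite /agrees_at_leaves /no_leaf_reached.
case: (boolP (isleaf l)) => //= leaf_l.
have -> : o l = false.
  by apply: contraNF unrec_i => ol; apply/existsP; exists l; rewrite leaf_l ol andbT -[desc _ _]inE.
by case: b.
Qed.

Lemma cprob_received_false th o i : received o i ->
  cprob th (agrees_at_leaves o) i false = 0.
Proof.
elim/(dag_ind acyclic): i => i IH rec_i.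
rewrite cprob_recE /agrees_at_leaves.
case: (boolP (isleaf i)) => [leaf_i | nonleaf_i] /=.
  have [r /and3P[_ ir]] := existsP rec_i; rewrite (leaf_desc leaf_i ir) => -> /=.
  by rewrite /link_prob; ring.
have [j ij rec_j] := received_nonleaf nonleaf_i rec_i.
by rewrite [X in _ + _ * X](bigD1 j) //= IH // /link_prob; ring.
Qed.

Lemma cprob_received th o i : received o i ->
  cprob th (agrees_at_leaves o) i true =
    (1 - th i) * \big[Rmult/1]_(j | child i j) cprob th (agrees_at_leaves o) j true.
Proof.
move=> rec_i; rewrite cprob_recE /agrees_at_leaves.
case: (boolP (isleaf i)) => [leaf_i | nonleaf_i] /=.
  have [r /and3P[_ ir]] := existsP rec_i; rewrite (leaf_desc leaf_i ir) => -> /=.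
  by rewrite /link_prob; ring.
have [j ij rec_j] := received_nonleaf nonleaf_i rec_i.
by rewrite [X in _ + _ * X](bigD1 j) //= cprob_received_false // /link_prob; ring.
Qed.

Lemma cprob_observed_gt0 th o i : inTheta th -> 0 < cprob th (agrees_at_leaves o) i true.
Proof.
move=> th01; elim/(dag_ind acyclic): i => i IH.
have [rec_i | unrec_i] := boolP (received o i).
  rewrite cprob_received //; apply: Rmult_lt_0_compat; last exact: prodR_gt0.
  by have := th01 i; lra.
by rewrite cprob_unreceived //; case: (Gamma_bounds acyclic th01 i).
Qed.

Lemma ln_cprob_observed th o k i : inTheta th -> inTree k i ->
  ln (cprob th (agrees_at_leaves o) i true) =
    ln (Gamma hd tl th i) +
    \big[Rplus/0]_(l in subtree i) (if received o l then Lambda hd tl (Gamma hd tl th) l else 0).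
Proof.
move=> th01; elim/(dag_ind acyclic): i => i IH ki.
have [rec_i | unrec_i] := boolP (received o i); last first.
  rewrite cprob_unreceived // big1 ?Rplus_0_r // => l; rewrite inE => il.
  by case: ifP => // /(received_desc il); rewrite (negbTE unrec_i).
have [? ?] := th01 i.
rewrite cprob_received // ln_mult; last 2 first.
- lra.
- by apply: prodR_gt0 => j _; apply: cprob_observed_gt0.
rewrite ln_prodR => [|j _]; last exact: cprob_observed_gt0.
rewrite (eq_bigr _ (fun j ij => IH j ij (inTree_child ki ij))) big_split /=.
rewrite (big_subtree _ _ ki) /= rec_i Lambda_Gamma //.
(* The two copies of each sum differ in how their index type was elaborated;
   [set] identifies them, which [ring] cannot do. *)
set A := \big[_/_]_(c | child i c) ln _; set B := \big[_/_]_(c | child i c) \big[_/_]_(l in _) _.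
ring.
Qed.

(** * The log-likelihood *)

Definition observed_event k (o : 'I_m -> bool) (x : config) :=
  [forall r, (isleaf r && inTree k r) ==> (x r == o r)].

Lemma prob_observed th k o :
  prob hd tl S f th k (observed_event k o) = cprob th (agrees_at_leaves o) (S k) true.
Proof.
apply: prob_constrained => x; apply: eq_forallb => j.
by rewrite /agrees_at_leaves; case: (isleaf j); case: (inTree k j).
Qed.

Lemma ln_prob_observed th k o : inTheta th ->
  0 < prob hd tl S f th k (observed_event k o) /\
  ln (prob hd tl S f th k (observed_event k o)) =
    ln (Gamma hd tl th (S k)) +
    \big[Rplus/0]_(l : 'I_m)
      (if inTree k l && received o l then Lambda hd tl (Gamma hd tl th) l else 0).
Proof.
move=> th01; rewrite prob_observed; split; first exact: cprob_observed_gt0.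
rewrite (ln_cprob_observed _ _ (inTree_root k)) // big_mkcond; congr (_ + _).
apply: eq_bigr => l _; have -> : (l \in subtree (S k)) = inTree k l by rewrite inE.
by case: (inTree k l).
Qed.

Lemma loglik_psi th n obs : inTheta th ->
  loglik hd tl S f th n obs =
    \big[Rplus/0]_(k : 'I_K) (INR (n k) * ln (Gamma hd tl th (S k)))
    + \big[Rplus/0]_(i : 'I_m) (n1 hd tl S n obs i * Lambda hd tl (Gamma hd tl th) i).
Proof.
move=> th01; have obs_prob k t := ln_prob_observed k (obs k t) th01.
rewrite /loglik ln_prodR => [|k _]; last by apply: prodR_gt0 => t _; case: (obs_prob k t).
rewrite (eq_bigr (fun k => INR (n k) * ln (Gamma hd tl th (S k)) +
    \big[Rplus/0]_(l : 'I_m) (n1k hd tl S n obs k l * Lambda hd tl (Gamma hd tl th) l))).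
  by rewrite big_split /= exchange_big; congr (_ + _); apply: eq_bigr => l _; rewrite big_distrl.
move=> k _; rewrite ln_prodR => [|t _]; last by case: (obs_prob k t).
rewrite (eq_bigr _ (fun (t : 'I_(n k)) _ => proj2 (obs_prob k t))) big_split.
rewrite big_const card_ord iter_Rplus /=.
congr (_ + _); rewrite exchange_big; apply: eq_bigr => l _; rewrite /n1k.
by case: (inTree k l); rewrite ?sumR_count ?big1 ?Rmult_0_l.
Qed.

Lemma sum_children_regroup k (a g : 'I_m -> R) : (forall i, ~~ inTree k i -> a i = 0) ->
  \big[Rplus/0]_(i : 'I_m) (a i * \big[Rplus/0]_(c | child i c) g c) =
    \big[Rplus/0]_(c : 'I_m) (if inTree k c && (c != S k) then a (f k c) * g c else 0).
Proof.
move=> a_off_tree.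
under eq_bigr do rewrite big_distrr big_mkcond.
rewrite exchange_big; apply: eq_bigr => c _.
rewrite -big_mkcond -big_distrl /=; case: ifP => [/andP[kc c_neq_S] | c_off].
  case/andP: (parentP kc c_neq_S) => fc_c _.
  rewrite (bigD1 (f k c)) //= big1 ?Rplus_0_r // => i /andP[ic i_neq_fc].
  apply: a_off_tree; apply: contra i_neq_fc => ki.
  by rewrite (parent_unique kc c_neq_S ic ki).
rewrite big1 ?Rmult_0_l // => i ic; apply: a_off_tree; apply: contraFN c_off => ki.
by rewrite (inTree_child ki ic) (child_neq_root k ic).
Qed.

Lemma sum_tree_counts k (N : R) (a g : 'I_m -> R) : (forall i, ~~ inTree k i -> a i = 0) ->
  \big[Rplus/0]_(i : 'I_m)
    ((if inTree k i then (if i == S k then N - a i else a (f k i) - a i) else 0) * g i) =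
  N * g (S k) + \big[Rplus/0]_(i : 'I_m) (a i * \big[Rplus/0]_(c | child i c) g c)
    - \big[Rplus/0]_(i : 'I_m) (a i * g i).
Proof.
move=> a_off_tree; rewrite (sum_children_regroup g a_off_tree).
rewrite (eq_bigr (fun i => (if i == S k then N * g i else 0) +
    (if inTree k i && (i != S k) then a (f k i) * g i else 0) + - (a i * g i))); last first.
  move=> i _; case: (boolP (inTree k i)) => [ki | /[dup] /a_off_tree -> ki] /=.
    by case: (i == S k) => /=; ring.
  have -> : (i == S k) = false by apply: contraNF ki => /eqP ->; apply: inTree_root.
  ring.
by rewrite !big_split /= sumR_opp -big_mkcond big_pred1_eq.
Qed.

Lemma loglik_psi_xi th n obs : inTheta th ->
  \big[Rplus/0]_(k : 'I_K) (INR (n k) * ln (Gamma hd tl th (S k)))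
    + \big[Rplus/0]_(i : 'I_m) (n1 hd tl S n obs i * Lambda hd tl (Gamma hd tl th) i) =
  \big[Rplus/0]_(i : 'I_m)
     (n1 hd tl S n obs i * ln ((1 - Gamma hd tl th i) / (1 - prod0 hd tl (Gamma hd tl th) i))
      + n0 hd tl S f n obs i * ln (Gamma hd tl th i)).
Proof.
move=> th01; set a := n1 hd tl S n obs; set xi := Gamma hd tl th.
have psi_sum : \big[Rplus/0]_(i : 'I_m) (a i * Lambda hd tl xi i) =
    \big[Rplus/0]_(i : 'I_m) (a i * ln (1 - th i))
    + \big[Rplus/0]_(i : 'I_m) (a i * \big[Rplus/0]_(c : 'I_m | child i c) ln (xi c))
    - \big[Rplus/0]_(i : 'I_m) (a i * ln (xi i)).
  rewrite (eq_bigr (fun i => a i * ln (1 - th i)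
      + a i * \big[Rplus/0]_(c : 'I_m | child i c) ln (xi c) + - (a i * ln (xi i)))).
    by rewrite !big_split sumR_opp.
  move=> i _; rewrite Lambda_Gamma // -/xi.
  by set s := \big[_/_]_(c | child i c) _; ring.
have xi_sum : \big[Rplus/0]_(i : 'I_m)
     (a i * ln ((1 - xi i) / (1 - prod0 hd tl xi i)) + n0 hd tl S f n obs i * ln (xi i)) =
    \big[Rplus/0]_(i : 'I_m) (a i * ln (1 - th i))
    + \big[Rplus/0]_(i : 'I_m) (n0 hd tl S f n obs i * ln (xi i)).
  by rewrite -big_split; apply: eq_bigr => i _; rewrite Gamma_loss_ratio.
have n0_sum : \big[Rplus/0]_(i : 'I_m) (n0 hd tl S f n obs i * ln (xi i)) =
    \big[Rplus/0]_(k : 'I_K) (INR (n k) * ln (xi (S k)))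
    + \big[Rplus/0]_(i : 'I_m) (a i * \big[Rplus/0]_(c : 'I_m | child i c) ln (xi c))
    - \big[Rplus/0]_(i : 'I_m) (a i * ln (xi i)).
  rewrite /n0 /a /n1.
  under eq_bigr do rewrite big_distrl /=.
  have n1k_off k i : ~~ inTree k i -> n1k hd tl S n obs k i = 0 by rewrite /n1k => /negbTE ->.
  rewrite exchange_big (eq_bigr _ (fun k _ =>
    sum_tree_counts (INR (n k)) (fun i => ln (xi i)) (n1k_off k))).
  rewrite !big_split /= /Rminus sumR_opp; congr (_ + _ + - _).
    by rewrite exchange_big; apply: eq_bigr => i _; rewrite big_distrl.
  by rewrite exchange_big; apply: eq_bigr => i _; rewrite big_distrl.
rewrite psi_sum xi_sum n0_sum; ring.
Qed.

Lemma link_prob_ge0 th j a b : inTheta th -> 0 <= link_prob th j a b.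
Proof. by move=> th01; have := th01 j; rewrite /link_prob; case: a; case: b; lra. Qed.

Lemma link_prob_gt0 th j (a b : bool) : inTheta th -> (b -> a) -> 0 < link_prob th j a b.
Proof.
move=> th01; have := th01 j; rewrite /link_prob.
by case: a; case: b => th_j ba //=; [lra | lra | have := ba isT | lra].
Qed.

Lemma weight_ge0 th k x : inTheta th -> 0 <= weight hd tl S f th k x.
Proof.
move=> th01; rewrite weight_supported; case: ifP => _; last exact: Rle_refl.
apply: (big_ind (Rle 0)) => [|a b|j _]; [lra | nra | exact: link_prob_ge0].
Qed.

Lemma weight_le_prob th k (A : pred config) x : inTheta th -> A x ->
  weight hd tl S f th k x <= prob hd tl S f th k A.
Proof.
move=> th01 Ax; rewrite /prob (bigD1 x) //= -[X in X <= _]Rplus_0_r.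
apply: Rplus_le_compat_l; apply: (big_ind (Rle 0)) => [|a b|y _]; [lra | lra | exact: weight_ge0].
Qed.

(** * Conditional meaning of [psi] *)

Section ConditionalLoss.
Variables (th : 'I_m -> R) (k : 'I_K) (i : 'I_m).
Hypotheses (th01 : inTheta th) (ki : inTree k i) (nonleaf_i : ~~ isleaf i).
Local Notation xi := (Gamma hd tl th).

Definition at_tail (x : config) := (i == S k) || x (f k i).
Definition unreached_below (x : config) := [forall r, (isleaf r && desc i r) ==> ~~ x r].

Definition den_constraint j b :=
  ((isleaf j && desc i j) ==> ~~ b) && (((i != S k) && (j == f k i)) ==> b).
Definition num_constraint j b := den_constraint j b && ((j == i) ==> b).

Lemma den_constraintP (x : config) :
  (unreached_below x && at_tail x) = [forall j, inTree k j ==> den_constraint j (x j)].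
Proof.
apply/andP/forallP => [[/forallP unrec tail] j | den].
  apply/implyP => kj; apply/andP; split; first exact: unrec.
  by apply/implyP => /andP[i_neq_S /eqP ->]; move: tail; rewrite /at_tail (negbTE i_neq_S).
split.
  apply/forallP => r; apply/implyP => /andP[leaf_r ir].
  by have /implyP/(_ (inTree_desc ki ir))/andP[/implyP -> //] := den r; rewrite leaf_r.
rewrite /at_tail; case: (boolP (i == S k)) => //= i_neq_S.
have kfi : inTree k (f k i) by case/andP: (parentP ki i_neq_S).
by have /implyP/(_ kfi)/andP[_ /implyP ->] := den (f k i); rewrite ?i_neq_S ?eqxx.
Qed.

Lemma num_constraintP (x : config) :
  [&& x i, unreached_below x & at_tail x] = [forall j, inTree k j ==> num_constraint j (x j)].
Proof.
rewrite den_constraintP; apply/andP/forallP => [[xi_true den] j | num].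
  apply/implyP => kj; rewrite /num_constraint (implyP (forallP den j) kj).
  by apply/implyP => /eqP ->.
split; first by have /implyP/(_ ki)/andP[_ /implyP ->] := num i.
by apply/forallP => j; apply/implyP => kj; have /implyP/(_ kj)/andP[] := num j.
Qed.

Lemma den_constraint_below l : desc i l -> den_constraint l =1 no_leaf_reached l.
Proof.
move=> il b; rewrite /den_constraint /no_leaf_reached il andbT.
case: (boolP (i == S k)) => [_ | i_neq_S] /=; first by rewrite andbT.
suff -> : (l == f k i) = false by rewrite andbT.
by apply: contraTF il => /eqP ->; rewrite (desc_parent_neq ki i_neq_S).
Qed.

Lemma num_constraint_below l : desc i l -> l != i -> num_constraint l =1 no_leaf_reached l.
Proof.
by move=> il l_neq_i b; rewrite /num_constraint den_constraint_below // (negbTE l_neq_i) andbT.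
Qed.

Lemma cprob_den_at : cprob th den_constraint i true = xi i.
Proof.
rewrite -(proj1 (cprob_no_leaf_reached i th01)); apply: cprob_ext => l.
by rewrite inE; apply: den_constraint_below.
Qed.

Lemma cprob_num_at : cprob th num_constraint i true = (1 - th i) * prodC hd tl xi i.
Proof.
rewrite cprob_recE.
have -> : num_constraint i true.
  by rewrite /num_constraint /den_constraint (negbTE nonleaf_i) !implybT.
have -> : num_constraint i false = false by rewrite /num_constraint eqxx andbF.
rewrite Rplus_0_r; congr (_ * _); apply: eq_bigr => j ij.
rewrite -(proj1 (cprob_no_leaf_reached j th01)); apply: cprob_ext => l; rewrite inE => jl.
apply: num_constraint_below; first exact: connect_trans (connect1 ij) jl.
by apply: contraNneq (acyclic ij) => li; rewrite -li.
Qed.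

Lemma cprob_num_den j a : inTree k j -> desc j i -> j != i ->
  cprob th num_constraint j a * xi i =
    cprob th den_constraint j a * ((1 - th i) * prodC hd tl xi i).
Proof.
elim/(dag_ind acyclic): j a => j IH a kj ji j_neq_i.
have [l0 jl0 l0i] : exists2 l0, child j l0 & desc l0 i.
  by case: (desc_first_step ji) => [ij | //]; rewrite ij eqxx in j_neq_i.
have rest b : \big[Rmult/1]_(l | child j l && (l != l0)) cprob th num_constraint l b =
              \big[Rmult/1]_(l | child j l && (l != l0)) cprob th den_constraint l b.
  apply: eq_bigr => l /andP[jl l_neq_l0]; apply: cprob_ext => l'; rewrite inE => ll' b'.
  rewrite /num_constraint; case: (eqVneq l' i) => [l'i | _]; last by rewrite andbT.
  rewrite -l'i in l0i; have l_eq_l0 := child_subtrees_disjoint kj jl jl0 ll' l0i.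
  by rewrite l_eq_l0 eqxx in l_neq_l0.
have key b : den_constraint j b ->
    cprob th num_constraint l0 b * xi i =
      cprob th den_constraint l0 b * ((1 - th i) * prodC hd tl xi i).
  have [l0i_eq | l0_neq_i] := eqVneq l0 i; last first.
    by move=> _; apply: IH => //; apply: inTree_child kj jl0.
  rewrite l0i_eq in jl0 *; have i_neq_S := child_neq_root k jl0.
  rewrite {1}/den_constraint i_neq_S (parent_unique ki i_neq_S jl0 kj) eqxx andbT.
  case: b => /=; last by rewrite andbF.
  by move=> _; rewrite cprob_num_at cprob_den_at; ring.
have step b : (if den_constraint j b then
      link_prob th j a b * \big[Rmult/1]_(l | child j l) cprob th num_constraint l b else 0)
      * xi i =
    (if den_constraint j b then
      link_prob th j a b * \big[Rmult/1]_(l | child j l) cprob th den_constraint l b else 0) *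
    ((1 - th i) * prodC hd tl xi i).
  case: ifP => den_b; last ring.
  rewrite (bigD1 l0 jl0) [in RHS](bigD1 l0 jl0) /= rest; set r := \big[Rmult/1]_(l | _) _.
  transitivity (link_prob th j a b * r * (cprob th num_constraint l0 b * xi i)); first ring.
  by rewrite key //; ring.
have num_den_j b : num_constraint j b = den_constraint j b.
  by rewrite /num_constraint (negbTE j_neq_i) andbT.
rewrite !cprob_recE !num_den_j [LHS]Rmult_plus_distr_r [RHS]Rmult_plus_distr_r.
by congr (_ + _); apply: step.
Qed.

(* A configuration of positive weight in the conditioning event: the probe
   travels exactly along the path from [S k] to the parent of [i]. *)
Definition path_config : config := [ffun l => [&& i != S k, desc l (f k i) & inTree k l]].

Lemma path_config_event : unreached_below path_config && at_tail path_config.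
Proof.
apply/andP; split.
  apply/forallP => r; apply/implyP => /andP[_ ir]; rewrite ffunE.
  apply/negP => /and3P[i_neq_S rfi _].
  by move: (desc_parent_neq ki i_neq_S); rewrite /Defs.desc (connect_trans ir rfi).
rewrite /at_tail; case: (boolP (i == S k)) => //= i_neq_S; rewrite ffunE i_neq_S desc_refl.
by case/andP: (parentP ki i_neq_S).
Qed.

Lemma weight_path_config_gt0 : 0 < weight hd tl S f th k path_config.
Proof.
rewrite weight_supported; case: ifP => [_ | /negbT /forallPn [j]]; last first.
  by rewrite negb_imply negbK inE ffunE => /andP[/negP nkj /and3P[_ _ kj]].
apply: prodR_gt0 => j _; apply: link_prob_gt0 => //; rewrite ffunE => /and3P[i_neq_S jfi kj].
case: (eqVneq j (S k)) => //= j_neq_S; rewrite ffunE i_neq_S.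
case/andP: (parentP kj j_neq_S) => fj_j -> /=; rewrite andbT.
exact: connect_trans (connect1 fj_j) jfi.
Qed.

Lemma Lambda_conditional : Lambda hd tl xi i =
  ln (prob hd tl S f th k (fun x => [&& x i, unreached_below x & at_tail x]) /
      prob hd tl S f th k (fun x => unreached_below x && at_tail x)).
Proof.
have den_gt0 : 0 < prob hd tl S f th k (fun x => unreached_below x && at_tail x).
  apply: Rlt_le_trans weight_path_config_gt0 _.
  exact: weight_le_prob path_config_event.
rewrite (prob_constrained _ num_constraintP) (prob_constrained _ den_constraintP) in den_gt0 *.
have [? ?] := Gamma_bounds acyclic th01 i.
set Q := (1 - th i) * prodC hd tl xi i.
have num_den : cprob th num_constraint (S k) true * xi i = cprob th den_constraint (S k) true * Q.
  have [<- | i_neq_S] := eqVneq i (S k); first by rewrite cprob_num_at cprob_den_at /Q; ring.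
  by apply: cprob_num_den; rewrite ?inTree_root // eq_sym.
rewrite /Lambda (negbTE nonleaf_i) thetaOf_Gamma //.
have -> : xi i - th i = Q by rewrite /Q (Gamma_rec acyclic th i) (negbTE nonleaf_i); ring.
congr ln; apply: (Rmult_eq_reg_r (cprob th den_constraint (S k) true * xi i)); last by nra.
transitivity (cprob th den_constraint (S k) true * Q); first by field; lra.
by rewrite -num_den; field; lra.
Qed.

End ConditionalLoss.

End Trees.

Theorem mainTheorem3 (V : eqType) (m K : nat) (hd tl : 'I_m -> V)
  (S : 'I_K -> 'I_m) (f : 'I_K -> 'I_m -> 'I_m) :
  (leq 1 K) ->
  (* directed acyclic graph *)
  (forall i j, child hd tl i j -> ~~ desc hd tl j i) ->
  (* F_{S_k} is empty: the tail of S_k is a source node *)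
  (forall k j, ~~ child hd tl j (S k)) ->
  (* f k i is a parent of i lying in E_k, and it is the only one *)
  (forall k i, inTree hd tl S k i -> i != S k ->
     child hd tl (f k i) i && inTree hd tl S k (f k i)) ->
  (forall k i j, inTree hd tl S k i -> i != S k ->
     child hd tl j i -> inTree hd tl S k j -> j = f k i) ->
  (* every link belongs to some tree *)
  (forall i, exists k, inTree hd tl S k i) ->
  (* each root link belongs only to its own tree *)
  (forall k k', inTree hd tl S k' (S k) -> k = k') ->
  (* (1) Lambda is injective on Xi, hence a bijection Xi -> Psi := Lambda(Xi) *)
  (forall xi1 xi2, inXi hd tl xi1 -> inXi hd tl xi2 ->
     (forall i, Lambda hd tl xi1 i = Lambda hd tl xi2 i) ->
     forall i, xi1 i = xi2 i)
  /\
  (* (2) the two expressions of the log-likelihood *)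
  (forall theta, inTheta theta ->
   forall (n : 'I_K -> nat) (obs : 'I_K -> nat -> 'I_m -> bool),
     loglik hd tl S f theta n obs =
       \big[Rplus/0]_(k : 'I_K) (INR (n k) * ln (Gamma hd tl theta (S k)))
       + \big[Rplus/0]_(i : 'I_m)
           (n1 hd tl S n obs i * Lambda hd tl (Gamma hd tl theta) i)
     /\
     loglik hd tl S f theta n obs =
       \big[Rplus/0]_(i : 'I_m)
         (n1 hd tl S n obs i *
            ln ((1 - Gamma hd tl theta i) / (1 - prod0 hd tl (Gamma hd tl theta) i))
          + n0 hd tl S f n obs i * ln (Gamma hd tl theta i)))
  /\
  (* (3) conditional-probability meaning of psi_i for non-leaf i *)
  (forall theta, inTheta theta ->
   forall (i : 'I_m) (k : 'I_K), ~~ isleaf hd tl i -> inTree hd tl S k i ->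
     let attail x := (i == S k) || x (f k i) in
     let nolossR x := [forall r, (isleaf hd tl r && desc hd tl i r) ==> ~~ x r] in
     Lambda hd tl (Gamma hd tl theta) i =
       ln (prob hd tl S f theta k (fun x => [&& x i, nolossR x & attail x])
           / prob hd tl S f theta k (fun x => nolossR x && attail x))).
Proof.
move=> _ acyclic root_source parentP parent_unique _ _.
split.
  move=> xi1 xi2 /(inXi_bounds acyclic) xi1_01 /(inXi_bounds acyclic) xi2_01.
  exact: Lambda_inj.
split.
  move=> th th01 n obs.
  rewrite (loglik_psi acyclic root_source parentP parent_unique n obs th01).
  by split=> //; apply: loglik_psi_xi.
move=> th th01 i k nonleaf_i ki /=.
exact: Lambda_conditional.
Qed.
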